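(* The consecutive patterns $110$ and $100$ are super-strongly Wilf equivalent.
   Context: An inversion sequence of length $n$ is an integer sequence $e=e_1\dots e_n$ with $0\le e_i<i$ for all $i$; $\mathbf{I}_n$ denotes the set of these. $\mathrm{Em}(110,e)$ is the set of $i$ with $e_i=e_{i+1}>e_{i+2}$, and $\mathrm{Em}(100,e)$ the set of $i$ with $e_i>e_{i+1}=e_{i+2}$. Two consecutive patterns $p,p'$ are super-strongly Wilf equivalent if $|\{e\in\mathbf{I}_n:\mathrm{Em}(p,e)=T\}|=|\{e\in\mathbf{I}_n:\mathrm{Em}(p',e)=T\}|$ for all $n$ and all $T\subseteq[n]$. *)

From mathcomp Require Import all_boot.
Set Implicit Arguments. Unset Strict Implicit. Unset Printing Implicit Defensive.

(* Convention: position i (1-based, as in the paper) of a sequence of length n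
   is represented by the 0-based index i-1 : 'I_n.  Entries are stored as
   naturals in an n.-tuple over 'I_n (any entry of an inversion sequence is < n). *)

Definition ent n (e : n.-tuple 'I_n) (j : nat) : nat := nth 0 (map val e) j.

Definition invseqs (n : nat) : {set n.-tuple 'I_n} :=
  [set e : n.-tuple 'I_n | [forall j : 'I_n, ent e j <= j]].

Definition Em110 n (e : n.-tuple 'I_n) : {set 'I_n} :=
  [set j : 'I_n | (j.+2 < n) && (ent e j == ent e j.+1) && (ent e j.+1 > ent e j.+2)].

Definition Em100 n (e : n.-tuple 'I_n) : {set 'I_n} :=
  [set j : 'I_n | (j.+2 < n) && (ent e j > ent e j.+1) && (ent e j.+1 == ent e j.+2)].

From mathcomp Require Import all_boot zify.

Set Implicit Arguments.
Unset Strict Implicit.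
Unset Printing Implicit Defensive.

(* An inversion sequence of length m is encoded as a list s of
   naturals with s_j <= j (0-based), and a consecutive pattern of length 3 as
   a test q a b c on three consecutive entries (q110: a = b > c, q100:
   a > b = c).  [occ_exactly q T s] says that q occurs in s exactly at the
   positions j with T j.  Appending an entry y to s can only create a new
   occurrence at the position two steps before the end, and it does iff y
   "completes" q after the two last entries of s.  By simultaneous induction
   on m we prove two equidistribution facts over sequences of length m:
   (A) for every T, the last entry has the same distribution on sequences
       with 110-occurrence set T as on those with 100-occurrence set T;
   (B) for every T and x, equally many of the former are completed to a 110
       by x as of the latter are completed to a 100 by x.
   (A) at m+1 follows from (A) and (B) at m.  (B) at m+1 follows from (A) at
   m: a 110 ending in x arises by repeating a last entry v > x, a 100 ending
   in x by appending x < v, and neither step creates an occurrence of its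
   own pattern at the new position.  The theorem is the case of (A) with a
   constant test on the last entry, once the sets Em(p, e) and their counts
   are translated into this encoding (positions i with i + 2 >= n never
   carry an occurrence). *)

Fixpoint invlist (m : nat) : seq (seq nat) :=
  if m is k.+1 then [seq rcons s y | y <- iota 0 k.+1, s <- invlist k] else [:: [::]].

Lemma invlistS m : invlist m.+1 = [seq rcons s y | y <- iota 0 m.+1, s <- invlist m].
Proof. by []. Qed.

Lemma mem_invlist m s :
  (s \in invlist m) = (size s == m) && all (fun j => nth 0 s j <= j) (iota 0 m).
Proof.
elim: m s => [|m IH] s; first by case: s.
have iotaS : iota 0 m.+1 = rcons (iota 0 m) m by rewrite -cats1 -addn1 iotaD.
rewrite invlistS [in RHS]iotaS all_rcons.
apply/allpairsP/andP => [[[y t] [Hy Ht ->]] | [/eqP Hsz /andP[Hlast Hall]]].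
  rewrite [(_, _).1]/= [(_, _).2]/= in Hy Ht *.
  have Hym : y <= m by move: Hy; rewrite mem_iota /=; lia.
  move: Ht; rewrite IH size_rcons => /andP[/eqP Ht Hall].
  rewrite Ht nth_rcons Ht ltnn (eqxx m) Hym; split=> //.
  apply/allP => j Hj; have := allP Hall j Hj; rewrite mem_iota in Hj.
  by rewrite nth_rcons Ht (andP Hj).2.
case/lastP: s Hsz Hlast Hall => [|t y] //; rewrite size_rcons => -[Ht].
rewrite nth_rcons Ht ltnn eqxx => Hy Hall.
exists (y, t); split=> //; first by rewrite mem_iota ltnS.
rewrite [(_, _).2]/= IH Ht eqxx; apply/allP => j Hj; have := allP Hall j Hj.
by rewrite mem_iota in Hj; rewrite nth_rcons Ht (andP Hj).2.
Qed.

Lemma size_invlist m s : s \in invlist m -> size s = m.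
Proof. by rewrite mem_invlist => /andP[/eqP]. Qed.

Lemma last_invlist m s : s \in invlist m -> last 0 s <= m.
Proof.
rewrite mem_invlist => /andP[/eqP Hs Hall].
case: m Hs Hall => [|m] Hs Hall; first by case: s Hs Hall.
rewrite -nth_last Hs; apply: leqW; apply: (allP Hall); rewrite mem_iota; lia.
Qed.

Lemma uniq_invlist m : uniq (invlist m).
Proof.
elim: m => [|m IH] //; rewrite invlistS.
apply: allpairs_uniq => //; first exact: iota_uniq.
by move=> [y1 s1] [y2 s2] _ _ /= /rcons_inj [-> ->].
Qed.

Lemma count_invlistS (P : pred (seq nat)) m :
  count P (invlist m.+1) = \sum_(y < m.+1) count (fun s => P (rcons s (y : nat))) (invlist m).
Proof.
rewrite invlistS count_flatten -map_comp sumnE big_map -val_enum_ord big_map.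
by rewrite -big_enum; apply: eq_bigr => y _; rewrite /= count_map.
Qed.

Lemma count_and_eqb (A : Type) (L : seq A) (a b c d : pred A) (t : bool) :
  count a L = count b L ->
  count (fun s => a s && c s) L = count (fun s => b s && d s) L ->
  count (fun s => a s && (c s == t)) L = count (fun s => b s && (d s == t)) L.
Proof.
have split (e g : pred A) :
    count e L = count (fun s => e s && g s) L + count (fun s => e s && ~~ g s) L.
  by elim: L => //= x L ->; case: (e x); case: (g x) => /=; lia.
have select (e g : pred A) : count (fun s => e s && (g s == t)) L =
    if t then count (fun s => e s && g s) L else count (fun s => e s && ~~ g s) L.
  by case: t; apply: eq_count => s; rewrite ?eqb_id ?eqbF_neg.
move=> Hab Hcd; rewrite !select {select}; case: t => //.
by move: Hab; rewrite (split a c) (split b d) Hcd => /addnI.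
Qed.

Lemma sum_count_pick (A : eqType) (L : seq A) k (Q : A -> nat -> bool) (g : A -> nat) :
  (forall s y, s \in L -> Q s y -> y = g s) ->
  \sum_(y < k) count (Q ^~ y) L = count (fun s => Q s (g s) && (g s < k)) L.
Proof.
elim: L => [|a L IH] Hg; first by rewrite big1.
rewrite /= big_split IH => [|s y Hs]; last by apply: Hg; rewrite inE Hs orbT.
congr (_ + _); have Hga y : Q a y -> y = g a by apply: Hg; rewrite inE eqxx.
have [ltgk|] := ltnP (g a) k.
  rewrite (bigD1 (Ordinal ltgk)) //= andbT big1 ?addn0 // => y Hy.
  by case: (Q a y) / idP => // /Hga Hy'; case/eqP: Hy; apply: val_inj.
rewrite andbF => legk; rewrite big1 // => y _.
by case: (Q a y) / idP => // /Hga Hy; move: (ltn_ord y); rewrite Hy ltnNge legk.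
Qed.

Definition occ (q : nat -> nat -> nat -> bool) (s : seq nat) (j : nat) : bool :=
  (j.+2 < size s) && q (nth 0 s j) (nth 0 s j.+1) (nth 0 s j.+2).

Definition occ_exactly (q : nat -> nat -> nat -> bool) (T : pred nat) (s : seq nat) : bool :=
  all (fun j => occ q s j == T j) (iota 0 (size s).-2).

Definition penult (s : seq nat) : nat := nth 0 s (size s).-2.

Definition completes (q : nat -> nat -> nat -> bool) (x : nat) (s : seq nat) : bool :=
  (1 < size s) && q (penult s) (last 0 s) x.

Lemma occ_rcons q s y j : j.+2 < size s -> occ q (rcons s y) j = occ q s j.
Proof.
move=> Hj; rewrite /occ size_rcons !nth_rcons Hj.
by rewrite (ltn_trans _ Hj) // (ltn_trans (ltnSn _) Hj) // (ltn_trans Hj).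
Qed.

Lemma occ_rcons_last q s y : occ q (rcons s y) (size s).-2 = completes q y s.
Proof.
rewrite /occ /completes /penult size_rcons -nth_last !nth_rcons.
case: s => [|a [|b s]] //=.
by rewrite !ltnSn ltnn ltnS leqnSn eqxx.
Qed.

Lemma occ_exactly_small q T s : size s <= 2 -> occ_exactly q T s.
Proof. by rewrite /occ_exactly; case: s => [|a [|b [|c s]]]. Qed.

Lemma occ_exactly_rcons q T s y :
  occ_exactly q T (rcons s y) = occ_exactly q T s && ((size s < 2) || (completes q y s == T (size s).-2)).
Proof.
have [small|big] := ltnP (size s) 2.
  by rewrite !occ_exactly_small ?size_rcons // ltnW.
rewrite /occ_exactly size_rcons orFb.
have -> : iota 0 (size s).+1.-2 = rcons (iota 0 (size s).-2) (size s).-2.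
  by rewrite -cats1 (_ : [:: _] = iota (0 + (size s).-2) 1) // -iotaD; congr iota; lia.
rewrite all_rcons occ_rcons_last andbC; congr (_ && _).
by apply: eq_in_all => j; rewrite mem_iota => /andP[_ Hj]; rewrite occ_rcons //; lia.
Qed.

Lemma completes_rcons q x s y : completes q x (rcons s y) = (0 < size s) && q (last 0 s) y x.
Proof.
rewrite /completes /penult size_rcons ltnS last_rcons nth_rcons.
by case: s => [|a s] //=; rewrite ltnSn nth_last.
Qed.

Definition q110 (a b c : nat) : bool := (a == b) && (c < b).
Definition q100 (a b c : nat) : bool := (b < a) && (b == c).

Definition same_last_law (m : nat) : Prop :=
  forall (T f : pred nat),
    count (fun s => occ_exactly q110 T s && f (last 0 s)) (invlist m) =
    count (fun s => occ_exactly q100 T s && f (last 0 s)) (invlist m).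

Definition same_completions (m : nat) : Prop :=
  forall (T : pred nat) (x : nat),
    count (fun s => occ_exactly q110 T s && completes q110 x s) (invlist m) =
    count (fun s => occ_exactly q100 T s && completes q100 x s) (invlist m).

Lemma same_occ_exactly_count m T : same_last_law m ->
  count (occ_exactly q110 T) (invlist m) = count (occ_exactly q100 T) (invlist m).
Proof. by move/(_ T predT); rewrite !(eq_count (fun s => andbT (occ_exactly _ T s))). Qed.

Lemma count_andb_const (A : Type) (P : pred A) (b : bool) (L : seq A) :
  count (fun s => P s && b) L = b * count P L.
Proof. by case: b; rewrite ?mul1n ?mul0n; elim: L => //= a L ->; rewrite ?andbT ?andbF. Qed.

Lemma count_occ_exactly_rcons q T m y :
  count (fun s => occ_exactly q T (rcons s y)) (invlist m) =
  if m < 2 then count (occ_exactly q T) (invlist m)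
  else count (fun s => occ_exactly q T s && (completes q y s == T m.-2)) (invlist m).
Proof.
case: ltnP => Hm; apply: eq_in_count => s /size_invlist Hs; rewrite occ_exactly_rcons Hs.
  by rewrite Hm andbT.
by rewrite ltnNge Hm.
Qed.

Lemma same_last_law_succ m :
  same_last_law m -> same_completions m -> same_last_law m.+1.
Proof.
move=> Hlast Hcompl T f; rewrite !count_invlistS; apply: eq_bigr => y _.
under eq_count do rewrite last_rcons; under [RHS]eq_count do rewrite last_rcons.
rewrite !count_andb_const !count_occ_exactly_rcons; congr (_ * _); case: ifP => _.
  exact: same_occ_exactly_count.
apply: (@count_and_eqb _ _ _ _ (completes q110 y) (completes q100 y)).
  exact: same_occ_exactly_count.
exact: Hcompl.
Qed.

(* (A) at m gives (B) at m + 1: both sides count the sequences s of length m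
   with the prescribed occurrence set and last s > x, provided m > 0 and T
   does not demand an occurrence at position m - 2. *)
Lemma same_completions_succ m : same_last_law m -> same_completions m.+1.
Proof.
move=> Hlast T x; rewrite !count_invlistS.
set f := fun v => [&& 0 < m, (m < 2) || ~~ T m.-2 & x < v].
rewrite (@sum_count_pick _ _ _
  (fun s y => occ_exactly q110 T (rcons s y) && completes q110 x (rcons s y)) (last 0)); last first.
  by move=> s y _; rewrite completes_rcons /q110 => /andP[_ /andP[_ /andP[/eqP ->]]].
rewrite (@sum_count_pick _ _ _
  (fun s y => occ_exactly q100 T (rcons s y) && completes q100 x (rcons s y)) (fun=> x)); last first.
  by move=> s y _; rewrite completes_rcons /q100 => /andP[_ /andP[_ /andP[_ /eqP ->]]].
transitivity (count (fun s => occ_exactly q110 T s && f (last 0 s)) (invlist m)).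
  apply: eq_in_count => s Hs; rewrite occ_exactly_rcons completes_rcons (size_invlist Hs).
  have -> : completes q110 (last 0 s) s = false by rewrite /completes /q110 ltnn !andbF.
  have -> : last 0 s < m.+1 by rewrite ltnS last_invlist.
  rewrite andbT [q110 _ _ _]/q110 eqxx /f.
  by case: (occ_exactly q110 T s) (T m.-2) (m < 2) (0 < m) => [] [] [] [].
rewrite Hlast; apply: eq_in_count => s Hs; rewrite occ_exactly_rcons completes_rcons (size_invlist Hs).
rewrite [q100 _ _ _]/q100 eqxx andbT /f; case: (ltnP x (last 0 s)) => Hx; last by rewrite !andbF.
have -> : completes q100 x s = false by rewrite /completes /q100 (gtn_eqF Hx) !andbF.
have -> : x < m.+1 by rewrite ltnS (leq_trans (ltnW Hx)) ?last_invlist.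
by case: (occ_exactly q100 T s) (T m.-2) (m < 2) (0 < m) => [] [] [] [].
Qed.

Lemma same_last_law_all m : same_last_law m.
Proof.
suff [] : same_last_law m /\ same_completions m by [].
elim: m => [|m [Hlast Hcompl]]; first by split.
by split; [apply: same_last_law_succ | apply: same_completions_succ].
Qed.

Lemma perm_invseqs n :
  perm_eq [seq map val e | e : n.-tuple 'I_n <- enum (invseqs n)] (invlist n).
Proof.
apply: uniq_perm.
- by rewrite map_inj_uniq ?enum_uniq // => e1 e2 /(inj_map val_inj)/val_inj.
- exact: uniq_invlist.
move=> s; rewrite mem_invlist; apply/mapP/andP => [[e He ->]|[/eqP Hs Hall]].
  rewrite mem_enum inE in He; rewrite size_map size_tuple; split=> //.
  by apply/allP => j; rewrite mem_iota => /andP[_ Hj]; apply: (forallP He (Ordinal Hj)).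
have Hval : map val (pmap insub s : seq 'I_n) = s.
  rewrite (pmap_filter (insubK 'I_n)); apply/all_filterP/(all_nthP 0) => j Hj.
  have Hle : nth 0 s j <= j by apply: (allP Hall); rewrite mem_iota -Hs.
  by rewrite isSome_insub; apply: leq_ltn_trans Hle _; rewrite -Hs.
have Hsz : size (pmap insub s : seq 'I_n) == n by rewrite -(size_map val) Hval Hs.
exists (Tuple Hsz) => //; rewrite mem_enum inE; apply/forallP => j.
by rewrite /ent /= Hval; apply: (allP Hall); rewrite mem_iota add0n ltn_ord.
Qed.

Lemma card_invseqs n (P : pred (seq nat)) :
  #|[set e in invseqs n | P (map val e)]| = count P (invlist n).
Proof.
rewrite -(permP (perm_invseqs n)) count_map cardE -size_filter.
apply/perm_size/uniq_perm; [exact: enum_uniq | exact/filter_uniq/enum_uniq | move=> e].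
by rewrite mem_enum mem_filter mem_enum !inE andbC.
Qed.

Definition natpred n (T : {set 'I_n}) : pred nat := fun j => j \in map val (enum T).

Lemma natpredE n (T : {set 'I_n}) (i : 'I_n) : natpred T i = (i \in T).
Proof. by rewrite /natpred (mem_map val_inj) mem_enum. Qed.

Lemma occ_set_eq q n (T : {set 'I_n}) (s : seq nat) : size s = n ->
  ([set j : 'I_n | occ q s j] == T) =
  occ_exactly q (natpred T) s && (T \subset [set j : 'I_n | j.+2 < n]).
Proof.
move=> Hs; apply/eqP/andP => [<- | [Hexact /subsetP Hsub]].
  split; last by apply/subsetP => i; rewrite !inE => /andP[]; rewrite Hs.
  apply/allP => j; rewrite mem_iota Hs => /andP[_ Hj]; have Hjn : j < n by lia.
  by rewrite -[j]/(val (Ordinal Hjn)) natpredE inE.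
apply/setP => i; rewrite inE; case: (ltnP i.+2 n) => Hi.
  by apply/eqP; rewrite -natpredE; apply: (allP Hexact); rewrite mem_iota Hs; lia.
have -> : occ q s i = false by rewrite /occ Hs ltnNge Hi.
by apply/esym/negbTE/negP => /Hsub; rewrite inE ltnNge Hi.
Qed.

Lemma card_occ_set q n (T : {set 'I_n}) :
  #|[set e in invseqs n | [set j : 'I_n | occ q (map val e) j] == T]| =
  count (fun s => occ_exactly q (natpred T) s && (T \subset [set j : 'I_n | j.+2 < n])) (invlist n).
Proof.
rewrite -card_invseqs; apply: eq_card => e.
by rewrite !inE occ_set_eq // size_map size_tuple.
Qed.

Lemma Em110_occ n (e : n.-tuple 'I_n) : Em110 e = [set j : 'I_n | occ q110 (map val e) j].
Proof. by apply/setP => j; rewrite !inE /occ /q110 size_map size_tuple /ent andbA. Qed.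

Lemma Em100_occ n (e : n.-tuple 'I_n) : Em100 e = [set j : 'I_n | occ q100 (map val e) j].
Proof. by apply/setP => j; rewrite !inE /occ /q100 size_map size_tuple /ent andbA. Qed.

Theorem mainTheorem12 (n : nat) (T : {set 'I_n}) :
  #|[set e in invseqs n | Em110 e == T]| = #|[set e in invseqs n | Em100 e == T]|.
Proof.
under eq_finset do rewrite Em110_occ; under [in RHS]eq_finset do rewrite Em100_occ.
by rewrite !card_occ_set (same_last_law_all n (natpred T) (fun=> _)).
Qed.
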